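(* Let $\Delta,\omega,t$ be integers with $\omega\ge2$ and $2\le t\le\omega$, and suppose $\omega-1$ divides $\Delta$. Then \[ f_t(\Delta,\omega)=\rho_t\Big(T\big(\Delta+\tfrac{\Delta}{\omega-1},\,\omega\big)\Big)=\frac1t\binom{\omega-1}{t-1}\Big(\frac{\Delta}{\omega-1}\Big)^{t-1}. \]
   Context: $\mathcal{G}(\Delta,\omega)$ denotes the class of finite simple graphs $G$ with maximum degree $\Delta(G)\le\Delta$ and clique number $\omega(G)\le\omega$. $k_t(G)$ is the number of copies of $K_t$ in $G$ and $\rho_t(G)=k_t(G)/|V(G)|$. $f_t(\Delta,\omega)=\sup\{\rho_t(G): G\in\mathcal{G}(\Delta,\omega),\ |V(G)|\ge 1\}$. $T(n,r)$ denotes the $r$-partite Turán graph on $n$ vertices: the complete $r$-partite graph on $n$ vertices whose part sizes are all $\lfloor n/r\rfloor$ or $\lceil n/r\rceil$. *)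

From HB Require Import structures.
From mathcomp Require Import all_boot all_order all_algebra.
Set Implicit Arguments. Unset Strict Implicit. Unset Printing Implicit Defensive.
Import Order.TTheory GRing.Theory Num.Theory.

Definition simple_graph (V : finType) (e : rel V) : Prop :=
  symmetric e /\ irreflexive e.

Definition deg (V : finType) (e : rel V) (v : V) : nat := #|[set u | e v u]|.

Definition is_clique (V : finType) (e : rel V) (S : {set V}) : bool :=
  [forall x in S, forall y in S, (x != y) ==> e x y].

Definition k_t (V : finType) (e : rel V) (t : nat) : nat :=
  #|[set S : {set V} | is_clique e S && (#|S| == t)]|.

Definition rho_t (V : finType) (e : rel V) (t : nat) : rat :=
  ((k_t e t)%:R / (#|V|)%:R)%R.

Definition in_class (Delta omega : nat) (V : finType) (e : rel V) : Prop :=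
  simple_graph e /\ (forall v : V, deg e v <= Delta) /\
  (forall S : {set V}, is_clique e S -> #|S| <= omega).

Definition is_f_t (t Delta omega : nat) (x : rat) : Prop :=
  (forall (V : finType) (e : rel V), in_class Delta omega e -> 0 < #|V| ->
     (rho_t e t <= x)%R) /\
  (forall y : rat,
     (forall (V : finType) (e : rel V), in_class Delta omega e -> 0 < #|V| ->
        (rho_t e t <= y)%R) -> (x <= y)%R).

(* Turan graph T(n, r): vertices 0..n-1, vertex i in part (i mod r),
   adjacent iff in different parts; part sizes are floor(n/r) or ceil(n/r). *)
Definition turan_rel (n r : nat) : rel 'I_n :=
  fun i j => (i %% r) != (j %% r).
Arguments turan_rel : clear implicits.

From HB Require Import structures.
From mathcomp Require Import all_boot all_order all_algebra.
From mathcomp Require Import lra ring zify.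
Set Implicit Arguments. Unset Strict Implicit. Unset Printing Implicit Defensive.
Import Order.TTheory GRing.Theory Num.Theory.
Local Open Scope ring_scope.

(* Every K_t of G contains t vertices, so t * k_t(G) is the sum over v of the
   number of K_t's through v, i.e. of the number of K_(t-1)'s in the
   neighbourhood N(v): a graph on at most Delta vertices with clique number at
   most omega - 1.  That number is the clique polynomial (Lagrangian) of G
   evaluated at the indicator weight of N(v).  Moving all the weight of one of
   two non-adjacent vertices onto the other does not decrease the Lagrangian,
   so we may assume the support is a clique of size at most omega - 1, where
   Maclaurin's inequality bounds it by C(omega-1, t-1) (Delta/(omega-1))^(t-1).
   The Turan graph on Delta + Delta/(omega-1) vertices has omega parts of size
   Delta/(omega-1), is Delta-regular, and attains this bound. *)

Section ElementarySymmetric.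
Variable R : realFieldType.

Lemma bernoulli_ineq (a h : R) (n : nat) : 0 <= a -> 0 <= a + h ->
  a ^+ n.+1 + n.+1%:R * a ^+ n * h <= (a + h) ^+ n.+1.
Proof.
move=> a_ge0 ah_ge0; elim: n => [|n IHn]; first by rewrite !expr1 expr0; lra.
have an_ge0 : 0 <= a ^+ n := exprn_ge0 n a_ge0.
have sq_ge0 : 0 <= n.+1%:R * a ^+ n * (h * h).
  by apply: mulr_ge0; [apply: mulr_ge0 | rewrite -expr2 sqr_ge0].
apply: le_trans (_ : (a + h) * (a ^+ n.+1 + n.+1%:R * a ^+ n * h) <= _); last first.
  by rewrite [X in _ <= X]exprS ler_wpM2l.
move: sq_ge0; rewrite !exprS -!natr1; set A := a ^+ n; set N := n%:R => sq_ge0.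
have -> : (a + h) * (a * A + (N + 1) * A * h) =
  a * (a * A) + (N + 1 + 1) * (a * A) * h + (N + 1) * A * (h * h) by ring.
lra.
Qed.

Variable V : finType.
Implicit Types (x : V -> R) (U : {set V}).

Definition elem_sym x (r : nat) U : R :=
  \sum_(S : {set V} | (S \subset U) && (#|S| == r)) \prod_(v in S) x v.

Lemma elem_sym0 x U : elem_sym x 0 U = 1.
Proof.
rewrite /elem_sym (eq_bigl (pred1 set0)) ?big_pred1_eq ?big_set0 // => S /=.
by rewrite cards_eq0; apply/andP/eqP => [[_ /eqP //]|->]; rewrite sub0set.
Qed.

Lemma elem_symS_set0 x r : elem_sym x r.+1 set0 = 0.
Proof.
rewrite /elem_sym big_pred0 // => S; rewrite subset0.
by apply/negP => /andP[/eqP ->]; rewrite cards0.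
Qed.

Lemma elem_symS_setD1 x r U y : y \in U ->
  elem_sym x r.+1 U = elem_sym x r.+1 (U :\ y) + x y * elem_sym x r (U :\ y).
Proof.
move=> yU; rewrite /elem_sym (bigID (fun S : {set V} => y \in S)) /= addrC.
congr (_ + _).
  apply: eq_bigl => S; rewrite subsetD1.
  by case: (y \in S); rewrite ?andbT ?andbF //= andbAC.
rewrite (reindex_onto (fun S => y |: S) (fun S => S :\ y)) /=; last first.
  by move=> S /andP[_ yS]; rewrite setD1K.
rewrite mulr_sumr; apply: eq_big => S.
  rewrite subsetD1 setU11 andbT.
  case yS: (y \in S) => /=.
    rewrite andbF /=; apply/negbTE/negP => /andP[_ /eqP yS'].
    by have := setD11 y (y |: S); rewrite yS' yS.
  rewrite setU1K ?yS // eqxx andbT cardsU1 yS add1n eqSS.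
  by rewrite subUset sub1set yU andbT.
move=> /andP[_ /eqP yS]; rewrite big_setU1 //=.
by apply/negP => yS'; have := setD11 y (y |: S); rewrite yS yS'.
Qed.

(* The value of [elem_sym] at m equal weights of total S. *)
Definition uniform_esym (m r : nat) (S : R) : R := 'C(m, r)%:R * (S / m%:R) ^+ r.

Lemma uniform_esym_ge0 m r S : 0 <= S -> 0 <= uniform_esym m r S.
Proof. by move=> S_ge0; rewrite mulr_ge0 ?exprn_ge0 ?divr_ge0 ?ler0n. Qed.

Lemma ler_uniform_esym m r S S' : 0 <= S <= S' ->
  uniform_esym m r S <= uniform_esym m r S'.
Proof.
case/andP=> S_ge0 SS'; apply: ler_wpM2l; first exact: ler0n.
rewrite lerXn2r ?nnegrE ?divr_ge0 ?ler0n ?(le_trans S_ge0 SS') //.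
by apply: ler_wpM2r; rewrite ?invr_ge0 ?ler0n.
Qed.

Lemma uniform_esym_step n r (u y : R) : 0 <= u -> 0 <= y ->
  'C(n, r.+1)%:R * u ^+ r.+1 + y * ('C(n, r)%:R * u ^+ r)
    <= uniform_esym n.+1 r.+1 (n%:R * u + y).
Proof.
move=> u_ge0 y_ge0; set h := (y - u) / n.+1%:R.
have n1_neq0 : n.+1%:R != 0 :> R by rewrite pnatr_eq0.
have uhE : u + h = (n%:R * u + y) / n.+1%:R.
  by rewrite /h; field; rewrite addrC natr1.
have uh_ge0 : 0 <= u + h by rewrite uhE divr_ge0 ?addr_ge0 ?mulr_ge0 ?ler0n.
have binS : 'C(n.+1, r.+1)%:R = 'C(n, r.+1)%:R + 'C(n, r)%:R :> R.
  by rewrite binS natrD.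
have binM : 'C(n.+1, r.+1)%:R * r.+1%:R = n.+1%:R * 'C(n, r)%:R :> R.
  by rewrite -!natrM mulnC -(mul_bin_diag n.+1 r).
rewrite /uniform_esym -uhE.
suff -> : 'C(n, r.+1)%:R * u ^+ r.+1 + y * ('C(n, r)%:R * u ^+ r) =
    'C(n.+1, r.+1)%:R * (u ^+ r.+1 + r.+1%:R * u ^+ r * h).
  by rewrite ler_wpM2l ?ler0n ?bernoulli_ineq.
rewrite mulrDr !mulrA binM binS /h !exprS.
by field; rewrite addrC natr1.
Qed.

(* Adding a zero weight: [uniform_esym_step] with [y = 0]. *)
Lemma uniform_esymSl m r S : 0 <= S ->
  uniform_esym m r S <= uniform_esym m.+1 r S.
Proof.
move=> S_ge0; case: r => [|r]; first by rewrite /uniform_esym !bin0 !expr0.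
case: (posnP m) => [->|m_gt0].
  by rewrite /uniform_esym bin0n mul0r uniform_esym_ge0.
have SE : S = m%:R * (S / m%:R) + 0 by rewrite addr0 mulrC divfK ?pnatr_eq0 -?lt0n.
rewrite [in X in _ <= X]SE.
apply: le_trans (uniform_esym_step _ _ _ _) => //; last exact: divr_ge0.
by rewrite mul0r addr0.
Qed.

Lemma uniform_esym_mono m p r S : 0 <= S -> (m <= p)%N ->
  uniform_esym m r S <= uniform_esym p r S.
Proof.
move=> S_ge0; elim: p => [|p IHp]; first by rewrite leqn0 => /eqP ->.
rewrite leq_eqVlt => /orP[/eqP -> // | /IHp le_mp].
exact: le_trans le_mp (uniform_esymSl _ _ S_ge0).
Qed.

Lemma elem_sym_le_uniform x r U : (forall v, 0 <= x v) ->
  elem_sym x r U <= uniform_esym #|U| r (\sum_(v in U) x v).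
Proof.
move=> x_ge0; move Un: #|U| => n; elim: n U r Un => [|n IHn] U r Un.
  rewrite (cards0_eq Un); case: r => [|r].
    by rewrite elem_sym0 /uniform_esym bin0 expr0 mulr1.
  by rewrite elem_symS_set0 uniform_esym_ge0 // big_set0.
case: r => [|r]; first by rewrite elem_sym0 /uniform_esym bin0 expr0 mulr1.
have /set0Pn[y yU] : U != set0 by rewrite -card_gt0 Un.
have Uy_n : #|U :\ y| = n by move: Un; rewrite (cardsD1 y) yU => -[].
rewrite (elem_symS_setD1 _ _ yU) (big_setD1 y yU) /= addrC.
set T := \sum_(v in U :\ y) x v; set u := T / n%:R.
have T_ge0 : 0 <= T by exact: sumr_ge0.
have TE : T = n%:R * u.
  case: (posnP n) => [n0|n_gt0]; last by rewrite /u mulrC divfK ?pnatr_eq0 -?lt0n.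
  by rewrite /T n0 in Uy_n *; rewrite (cards0_eq Uy_n) big_set0 mul0r.
rewrite TE; apply: le_trans (uniform_esym_step _ _ (divr_ge0 T_ge0 (ler0n _ _)) (x_ge0 y)).
apply: lerD; first by have := IHn _ r.+1 Uy_n; rewrite -/T.
by apply: ler_wpM2l => //; have := IHn _ r Uy_n; rewrite -/T.
Qed.

End ElementarySymmetric.

Section Cliques.
Variables (V : finType) (e : rel V).

Lemma cliqueP (S : {set V}) u w :
  is_clique e S -> u \in S -> w \in S -> u != w -> e u w.
Proof. by move=> /forall_inP/(_ u) cS uS wS; move/forall_inP/(_ w wS)/implyP: (cS uS). Qed.

Lemma clique_sub (S U : {set V}) : is_clique e U -> S \subset U -> is_clique e S.
Proof.
move=> cU /subsetP sSU; apply/forall_inP => u uS; apply/forall_inP => w wS.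
by apply/implyP; apply: (cliqueP cU); rewrite ?sSU.
Qed.

Lemma clique_setU1 (v : V) (S : {set V}) : simple_graph e ->
  is_clique e S -> S \subset [set u | e v u] -> v \notin S /\ is_clique e (v |: S).
Proof.
move=> [e_sym e_irr] cS /subsetP SN.
have vS : v \notin S by apply/negP => /SN; rewrite inE e_irr.
split=> //; apply/forall_inP => a aS; apply/forall_inP => b bS; apply/implyP.
case/setU1P: aS => [-> | aS]; case/setU1P: bS => [-> | bS].
- by rewrite eqxx.
- by move=> _; have := SN b bS; rewrite inE.
- by rewrite e_sym => _; have := SN a aS; rewrite inE.
- exact: (cliqueP cS).
Qed.

End Cliques.

Section Lagrangian.
Variables (R : realFieldType) (V : finType) (e : rel V).
Implicit Types (x : V -> R) (S : {set V}).

Definition lagrangian (r : nat) x : R :=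
  \sum_(S : {set V} | is_clique e S && (#|S| == r)) \prod_(v in S) x v.

Definition supp x : {set V} := [set v | x v != 0].

Definition merge_weight x (a b : V) : V -> R :=
  fun v => if v == a then x a + x b else if v == b then 0 else x v.

Lemma prod_merge_weight_in x a b S : a \in S -> b \notin S ->
  \prod_(v in S) merge_weight x a b v = (x a + x b) * \prod_(v in S :\ a) x v.
Proof.
move=> aS bS; rewrite (big_setD1 a aS) /= /merge_weight eqxx; congr (_ * _).
apply: eq_bigr => v /setD1P[va vS]; rewrite (negbTE va).
by case: eqP => // vb; rewrite -vb vS in bS.
Qed.

Lemma prod_merge_weight_out x a b S : a \notin S -> b \in S ->
  \prod_(v in S) merge_weight x a b v = 0.
Proof.
move=> aS bS; rewrite (big_setD1 b bS) /= /merge_weight eqxx.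
by case: eqP => [ba | _]; [rewrite -ba bS in aS | rewrite mul0r].
Qed.

Lemma prod_merge_weight_none x a b S : a \notin S -> b \notin S ->
  \prod_(v in S) merge_weight x a b v = \prod_(v in S) x v.
Proof.
move=> aS bS; apply: eq_bigr => v vS; rewrite /merge_weight.
case: eqP => [va | _]; first by rewrite -va vS in aS.
by case: eqP => [vb | _] //; rewrite -vb vS in bS.
Qed.

Lemma prod_merge_weight x u w S : ~~ ((u \in S) && (w \in S)) ->
  (x u + x w) * \prod_(v in S) x v =
  x u * \prod_(v in S) merge_weight x u w v + x w * \prod_(v in S) merge_weight x w u v.
Proof.
case uS: (u \in S); case wS: (w \in S) => //= _.
- rewrite (@prod_merge_weight_in x u w) ?(@prod_merge_weight_out x w u) ?uS ?wS //.
  by rewrite (big_setD1 u) ?uS //=; ring.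
- rewrite (@prod_merge_weight_in x w u) ?(@prod_merge_weight_out x u w) ?uS ?wS //.
  by rewrite (big_setD1 w) ?wS //=; ring.
- by rewrite !prod_merge_weight_none ?uS ?wS //; ring.
Qed.

(* No clique contains both u and w, so the lagrangian is affine in the way
   their joint weight is split between them. *)
Lemma lagrangian_merge_weight r x u w : u != w -> ~~ e u w ->
  (x u + x w) * lagrangian r x =
  x u * lagrangian r (merge_weight x u w) + x w * lagrangian r (merge_weight x w u).
Proof.
move=> uw euw; rewrite /lagrangian !mulr_sumr -big_split /=.
apply: eq_bigr => S /andP[cS _]; apply: prod_merge_weight.
by apply/negP => /andP[uS wS]; rewrite (cliqueP cS uS wS uw) in euw.
Qed.

Lemma sum_merge_weight x a b : a != b -> \sum_v merge_weight x a b v = \sum_v x v.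
Proof.
move=> ab; have split_ab (f : V -> R) :
    \sum_v f v = f a + (f b + \sum_(v | (v != a) && (v != b)) f v).
  by rewrite (bigD1 a) //=; congr (_ + _); rewrite (bigD1 b) // eq_sym.
rewrite !split_ab /merge_weight eqxx eq_sym (negbTE ab) eqxx.
rewrite (eq_bigr x) => [|v /andP[va vb]]; first by ring.
by rewrite (negbTE va) (negbTE vb).
Qed.

Lemma merge_weight_ge0 x a b : (forall v, 0 <= x v) ->
  forall v, 0 <= merge_weight x a b v.
Proof.
by move=> x_ge0 v; rewrite /merge_weight; case: ifP => _; [exact: addr_ge0 | case: ifP].
Qed.

Lemma supp_merge_weight x a b : a \in supp x -> a != b ->
  supp (merge_weight x a b) \subset supp x :\ b.
Proof.
move=> aU ab; apply/subsetP => v; rewrite !inE /merge_weight.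
case: (eqVneq v a) => [-> | va]; first by rewrite ab; move: aU; rewrite inE.
by case: (eqVneq v b) => [-> | vb] //=; rewrite eqxx.
Qed.

Lemma sum_supp x : \sum_(v in supp x) x v = \sum_v x v.
Proof. by rewrite big_mkcond /=; apply: eq_bigr => v _; rewrite inE; case: eqP. Qed.

Lemma lagrangian_clique_supp p r x : (forall v, 0 <= x v) ->
  is_clique e (supp x) -> (#|supp x| <= p)%N ->
  lagrangian r x <= uniform_esym p r (\sum_v x v).
Proof.
move=> x_ge0 cU Up.
have -> : lagrangian r x = elem_sym x r (supp x).
  rewrite /lagrangian /elem_sym [LHS]big_mkcond [RHS]big_mkcond /=.
  apply: eq_bigr => S _; case SU: (S \subset supp x); first by rewrite (clique_sub cU SU).
  case: ifP => // _; have /subsetPn[v vS] : ~~ (S \subset supp x) by rewrite SU.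
  by rewrite inE negbK (big_setD1 v vS) => /eqP /= ->; rewrite mul0r.
apply: le_trans (elem_sym_le_uniform r _ x_ge0) _.
by rewrite sum_supp uniform_esym_mono ?sumr_ge0.
Qed.

Lemma lagrangian_merge_le r x u w (M : R) : u != w -> ~~ e u w ->
  0 < x u -> 0 < x w ->
  lagrangian r (merge_weight x u w) <= M -> lagrangian r (merge_weight x w u) <= M ->
  lagrangian r x <= M.
Proof.
move=> uw euw xu_gt0 xw_gt0 Lu Lw.
rewrite -(ler_pM2l (addr_gt0 xu_gt0 xw_gt0)) lagrangian_merge_weight // mulrDl.
by rewrite lerD // ler_wpM2l // ltW.
Qed.

Lemma lagrangian_le_uniform p r x : (forall v, 0 <= x v) ->
  (forall S, is_clique e S -> S \subset supp x -> (#|S| <= p)%N) ->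
  lagrangian r x <= uniform_esym p r (\sum_v x v).
Proof.
have [n] := ubnP #|supp x|; elim: n x => // n IHn x Un x_ge0 x_clique.
have [cU | /forall_inPn[u uU /forall_inPn[w wU]]] := boolP (is_clique e (supp x)).
  exact: lagrangian_clique_supp (x_clique _ cU (subxx _)).
rewrite negb_imply => /andP[uw euw].
have merged_le a b : a \in supp x -> b \in supp x -> a != b ->
    lagrangian r (merge_weight x a b) <= uniform_esym p r (\sum_v x v).
  move=> aU bU ab; have sub := supp_merge_weight aU ab.
  rewrite -(sum_merge_weight x ab); apply: IHn; last 2 first.
  - exact: merge_weight_ge0.
  - move=> S cS SU; apply: x_clique cS _.
    exact: subset_trans SU (subset_trans sub (subD1set _ _)).
  by apply: leq_ltn_trans (subset_leq_card sub) _; rewrite (cardsD1 b) bU in Un.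
have pos a : a \in supp x -> 0 < x a by rewrite inE lt0r => ->; exact: x_ge0.
apply: (lagrangian_merge_le uw euw (pos u uU) (pos w wU)); apply: merged_le => //.
by rewrite eq_sym.
Qed.

End Lagrangian.

Section CliqueCounting.
Variables (V : finType) (e : rel V).

Definition cliques_through (t : nat) (v : V) : {set {set V}} :=
  [set S | (is_clique e S && (#|S| == t)) && (v \in S)].

Definition cliques_within (t : nat) (N : {set V}) : {set {set V}} :=
  [set S | (is_clique e S && (#|S| == t)) && (S \subset N)].

Lemma card_cliques_through (t : nat) (v : V) : simple_graph e ->
  #|cliques_through t.+1 v| = #|cliques_within t [set u | e v u]|.
Proof.
move=> e_simple; have [_ e_irr] := e_simple.
have inj : {in cliques_through t.+1 v &, injective (fun S : {set V} => S :\ v)}.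
  move=> S1 S2; rewrite !inE => /andP[_ vS1] /andP[_ vS2] E.
  by rewrite -(setD1K vS1) -(setD1K vS2) E.
rewrite -(card_in_imset inj); apply: eq_card => S'; rewrite [in RHS]inE.
apply/imsetP/idP => [[S] | /andP[/andP[cS' /eqP S't] S'N]].
  rewrite inE => /andP[/andP[cS /eqP St] vS] ->.
  rewrite (clique_sub cS (subD1set S v)) /=; apply/andP; split.
    by move: St; rewrite (cardsD1 v) vS add1n => -[->].
  apply/subsetP => u /setD1P[uv uS]; rewrite inE.
  by apply: (cliqueP cS vS uS); rewrite eq_sym.
have [vS' cvS'] := clique_setU1 e_simple cS' S'N.
exists (v |: S'); last by rewrite setU1K.
by rewrite inE cvS' cardsU1 vS' S't setU11 /= eqxx.
Qed.

Lemma lagrangian_indicator (R : realFieldType) (t : nat) (N : {set V}) :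
  lagrangian e t (fun u => (u \in N)%:R : R) = #|cliques_within t N|%:R.
Proof.
rewrite -sum1_card natr_sum (eq_bigl _ _ (fun S => in_set _ S)) big_mkcondr /=.
apply: eq_bigr => S _; case SN: (S \subset N); last first.
  have /subsetPn[u uS uN] : ~~ (S \subset N) by rewrite SN.
  by rewrite (big_setD1 u uS) /= (negbTE uN) mul0r.
by apply: big1 => u uS; rewrite (subsetP SN u uS).
Qed.

Lemma card_cliques_through_le (Delta omega r : nat) (v : V) :
  in_class Delta omega e ->
  (#|cliques_through r.+1 v|%:R : rat) <= uniform_esym (omega - 1) r Delta%:R.
Proof.
move=> [e_simple [e_deg e_clique]]; set N := [set u | e v u].
set x := fun u => (u \in N)%:R : rat.
have suppE : supp x = N by apply/setP => u; rewrite inE /x; case: (u \in N).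
have sumE : \sum_u x u = (deg e v)%:R.
  rewrite /deg -sum1_card natr_sum [RHS]big_mkcond /=.
  by apply: eq_bigr => u _; rewrite /x inE; case: (e v u).
rewrite card_cliques_through // -(lagrangian_indicator rat).
apply: le_trans (_ : uniform_esym (omega - 1) r (deg e v)%:R <= _); last first.
  by rewrite ler_uniform_esym // ler0n ler_nat e_deg.
rewrite -sumE; apply: lagrangian_le_uniform => [u | S cS]; first exact: ler0n.
rewrite suppE => SN; have [vS cvS] := clique_setU1 e_simple cS SN.
by have := e_clique _ cvS; rewrite cardsU1 vS; lia.
Qed.

Lemma sum_card_cliques_through (t : nat) :
  (\sum_v #|cliques_through t v|)%N = (k_t e t * t)%N.
Proof.
set K := [set S : {set V} | is_clique e S && (#|S| == t)].
have cardE v : #|cliques_through t v| = (\sum_(S in K) (v \in S))%N.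
  rewrite -sum1_card big_mkcond [RHS]big_mkcond /=.
  by apply: eq_bigr => S _; rewrite !inE; case: (is_clique e S && _); case: (v \in S).
under eq_bigr => v _ do rewrite cardE.
rewrite exchange_big /= -sum_nat_const; apply: eq_bigr => S; rewrite inE => /andP[_ /eqP <-].
by rewrite -sum1_card [RHS]big_mkcond /=; apply: eq_bigr => v _; case: (v \in S).
Qed.

Lemma rho_t_le (Delta omega r : nat) : in_class Delta omega e -> (0 < #|V|)%N ->
  rho_t e r.+1 <= uniform_esym (omega - 1) r Delta%:R / r.+1%:R.
Proof.
move=> e_class V_gt0; set B := uniform_esym (omega - 1) r Delta%:R.
have : (k_t e r.+1 * r.+1)%:R <= #|V|%:R * B.
  have -> : #|V|%:R * B = \sum_(v : V) B by rewrite sumr_const mulr_natl.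
  rewrite -sum_card_cliques_through natr_sum.
  by apply: ler_sum => v _; exact: card_cliques_through_le.
by rewrite /rho_t natrM ler_pdivrMr ?ltr0n // mulrAC ler_pdivlMr ?ltr0n // [B * _]mulrC.
Qed.

End CliqueCounting.

Section CompleteMultipartite.
Variables (V : finType) (k : nat) (part : V -> 'I_k) (e : rel V).
Hypothesis eE : forall u v, e u v = (part u != part v).
Variable s : nat.
Hypothesis card_part : forall a, #|[set v | part v == a]| = s.

Lemma clique_part_inj (S : {set V}) : is_clique e S -> {in S &, injective part}.
Proof.
move=> cS u w uS wS; apply: contra_eq => uw.
by have := cliqueP cS uS wS uw; rewrite eE.
Qed.

Definition part_class (a : 'I_k) : {set V} := [set v | part v == a].

Section Transversals.
Variables (y0 : V) (P : {set 'I_k}).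

Lemma card_pfamily_part_class : #|pfamily y0 P part_class| = (s ^ #|P|)%N.
Proof.
have foldr_prod (l : seq 'I_k) :
    foldr muln 1 [seq #|part_class a| | a <- l] = (\prod_(a <- l) #|part_class a|)%N.
  by elim: l => [|a l IHl]; rewrite ?big_nil ?big_cons //= IHl.
rewrite card_pfamily foldr_prod big_enum.
by rewrite (eq_bigr _ (fun a _ => card_part a)) prod_nat_const.
Qed.

Lemma pfamily_part_class g : g \in pfamily y0 P part_class ->
  {in P, forall a, part (g a) = a}.
Proof. by move=> /pfamilyP[_ gF] a /gF; rewrite inE => /eqP. Qed.

Lemma pfamily_part_class_imset_inj :
  {in pfamily y0 P part_class &, injective (fun g : {ffun 'I_k -> V} => g @: P)}.
Proof.
move=> g1 g2 g1P g2P /= E; apply/ffunP => a.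
have [aP | aP] := boolP (a \in P); last first.
  have /pfamilyP[/subsetP g1_supp _] := g1P; have /pfamilyP[/subsetP g2_supp _] := g2P.
  by rewrite (eqP (contraR (g1_supp a) aP)) (eqP (contraR (g2_supp a) aP)).
have /imsetP[b bP gb] : g1 a \in g2 @: P by rewrite -E imset_f.
by rewrite gb -[b](pfamily_part_class g2P bP) -gb pfamily_part_class.
Qed.

(* A clique meeting exactly the parts in P is the image of P under a choice
   function a |-> (its vertex in part a). *)
Lemma card_cliques_on_parts :
  #|[set S : {set V} | (is_clique e S && (#|S| == #|P|)) && (part @: S == P)]|
    = (s ^ #|P|)%N.
Proof.
rewrite -card_pfamily_part_class -(card_in_imset pfamily_part_class_imset_inj).
apply: eq_card => S; rewrite [in LHS]inE.
apply/idP/imsetP => [/andP[/andP[cS _] /eqP SP] | [g gP ->]].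
  set g := [ffun a => if [pick v in S | part v == a] is Some v then v else y0].
  have gS a : a \in P -> g a \in S /\ part (g a) = a.
    rewrite -SP => /imsetP[v vS ->]; rewrite ffunE.
    case: pickP => [w /andP[wS /eqP] // | none].
    by have := none v; rewrite /= vS eqxx.
  exists g.
    apply/pfamilyP; split; last by move=> a /gS[_ ga]; rewrite inE ga.
    apply/subsetP => a; rewrite inE ffunE.
    case: pickP => [w /andP[wS /eqP <-] _ | _]; last by rewrite eqxx.
    by rewrite -SP imset_f.
  apply/setP => v; apply/idP/imsetP => [vS | [a /gS[gaS _] ->] //].
  have [gvS gv] : g (part v) \in S /\ part (g (part v)) = part v.
    by apply: gS; rewrite -SP imset_f.
  by exists (part v); [rewrite -SP imset_f | apply: (clique_part_inj cS)].
have partg := pfamily_part_class gP.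
have injg : {in P &, injective g}.
  by move=> a b aP bP gab; rewrite -(partg a aP) gab partg.
rewrite (card_in_imset injg) eqxx andbT; apply/andP; split.
  apply/forall_inP => _ /imsetP[a aP ->]; apply/forall_inP => _ /imsetP[b bP ->].
  by apply/implyP; rewrite eE !partg //; apply: contra => /eqP ->.
apply/eqP/setP => c; apply/imsetP/idP => [[_ /imsetP[a aP ->] ->] | cP].
  by rewrite partg.
by exists (g c); rewrite ?imset_f ?partg.
Qed.

End Transversals.

Lemma k_t_complete_multipartite (y0 : V) (t : nat) : k_t e t = ('C(k, t) * s ^ t)%N.
Proof.
have part_card S : is_clique e S && (#|S| == t) -> #|part @: S| == t.
  by move=> /andP[cS /eqP <-]; rewrite card_in_imset //; exact: clique_part_inj.
rewrite /k_t -sum1_card.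
rewrite (eq_bigl (fun S : {set V} => is_clique e S && (#|S| == t))) => [|S]; last first.
  by rewrite inE.
rewrite (partition_big (fun S : {set V} => part @: S) (fun P : {set 'I_k} => #|P| == t)) /=;
  last exact: part_card.
have := card_draws 'I_k t; rewrite card_ord => <-; rewrite -sum_nat_const.
apply: eq_big => [P | P /eqP <-]; first by rewrite inE.
by rewrite -(card_cliques_on_parts y0) -sum1_card; apply: eq_bigl => S; rewrite inE.
Qed.

End CompleteMultipartite.

Section Turan.
Variables (s omega : nat).
Hypothesis omega_gt0 : (0 < omega)%N.
Local Notation n := (s * omega)%N.

Definition turan_part (v : 'I_n) : 'I_omega := Ordinal (ltn_pmod v omega_gt0).

Lemma turan_relE u v : turan_rel n omega u v = (turan_part u != turan_part v).
Proof. by []. Qed.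

Lemma card_turan_part a : #|[set v : 'I_n | turan_part v == a]| = s.
Proof.
have lt_n (j : 'I_s) : (a + j * omega < n)%N.
  by have := ltn_ord a; have := ltn_ord j; nia.
pose h j := Ordinal (lt_n j).
have h_inj : injective h.
  move=> j1 j2 /(congr1 val) /= /eqP; rewrite eqn_add2l eqn_pmul2r // => /eqP.
  exact: val_inj.
rewrite -[RHS]card_ord -(card_imset _ h_inj); apply: eq_card => v.
rewrite [in LHS]inE; apply/eqP/imsetP => [/(congr1 val) /= va | [j _ ->]].
  have vs : (v %/ omega < s)%N by rewrite ltn_divLR.
  by exists (Ordinal vs) => //; apply: val_inj; rewrite /= {1}(divn_eq v omega) va addnC.
by apply: val_inj; rewrite /= addnC modnMDl modn_small.
Qed.

Lemma turan_in_class : in_class (s * (omega - 1)) omega (turan_rel n omega).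
Proof.
split; first by split=> [u v | u]; rewrite /turan_rel ?eqxx // eq_sym.
split=> [v | S cS].
  rewrite /deg; have -> : [set u | turan_rel n omega v u] =
      ~: [set u | turan_part u == turan_part v].
    by apply/setP => u; rewrite !inE turan_relE eq_sym.
  have := cardsC [set u | turan_part u == turan_part v].
  by rewrite card_turan_part card_ord mulnBr muln1; lia.
rewrite -(card_in_imset (clique_part_inj turan_relE cS)).
by apply: leq_trans (max_card _) _; rewrite card_ord.
Qed.

Lemma rho_t_turan r : (1 < omega)%N -> (0 < r)%N ->
  rho_t (turan_rel n omega) r.+1 =
    uniform_esym (omega - 1) r (s * (omega - 1))%:R / r.+1%:R.
Proof.
move=> omega_gt1 r_gt0; rewrite /uniform_esym.
have -> : (s * (omega - 1))%:R / (omega - 1)%:R = s%:R :> rat.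
  by rewrite natrM mulfK // pnatr_eq0 subn_eq0 -ltnNge.
rewrite /rho_t card_ord.
have [-> | s_gt0] := posnP s.
  by rewrite mul0n invr0 mulr0 expr0n gtn_eqF // mulr0 mul0r.
have y0 : 'I_n by exists 0%N; rewrite muln_gt0 s_gt0.
rewrite (k_t_complete_multipartite turan_relE card_turan_part y0) !natrM natrX.
have binE : 'C(omega, r.+1)%:R = omega%:R * 'C(omega - 1, r)%:R / r.+1%:R :> rat.
  by rewrite subn1 -natrM mul_bin_diag natrM [_ * _%:R]mulrC mulfK ?pnatr_eq0.
rewrite binE exprS; field.
by rewrite addrC natr1 !pnatr_eq0 -!lt0n s_gt0 omega_gt0.
Qed.

End Turan.

Lemma edgeless_in_class (Delta omega : nat) : (0 < omega)%N ->
  in_class Delta omega (fun _ _ : 'I_1 => false).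
Proof.
move=> omega_gt0; split=> //; split=> [v | S _].
  suff -> : deg (fun _ _ : 'I_1 => false) v = 0%N by [].
  by apply/eqP; rewrite cards_eq0; apply/eqP/setP => u; rewrite !inE.
by apply: leq_trans (max_card _) _; rewrite card_ord.
Qed.

Lemma is_f_t_attained (t Delta omega : nat) (x : rat) (V : finType) (e : rel V) :
  (forall (W : finType) (f : rel W), in_class Delta omega f -> (0 < #|W|)%N ->
     rho_t f t <= x) ->
  in_class Delta omega e -> (0 < #|V|)%N -> x <= rho_t e t -> is_f_t t Delta omega x.
Proof.
move=> x_ub e_class V_gt0 x_le; split=> // y y_ub.
exact: le_trans x_le (y_ub _ _ e_class V_gt0).
Qed.

Local Close Scope ring_scope.
Unset Implicit Arguments.

Theorem mainTheorem5 (Delta omega t : nat) :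
  2 <= omega -> 2 <= t <= omega -> (omega - 1 %| Delta)%N ->
  let n := (Delta + Delta %/ (omega - 1))%N in
  is_f_t t Delta omega (rho_t (turan_rel n omega) t) /\
  rho_t (turan_rel n omega) t =
    ((t%:R)^-1 * ('C(omega - 1, t - 1))%:R *
       ((Delta%:R / (omega - 1)%:R) ^+ (t - 1)) : rat)%R.
Proof.
move=> omega_gt1 /andP[t_gt1 _] dvd_Delta n.
have omega_gt0 : (0 < omega)%N by exact: ltnW.
set s := Delta %/ (omega - 1).
have DeltaE : Delta = (s * (omega - 1))%N by rewrite divnK.
have nE : n = (s * omega)%N by rewrite /n -/s {1}DeltaE mulnBr muln1 subnK // leq_pmulr.
clearbody n; subst n; case: t t_gt1 => [|r] // r_gt0; rewrite subSS subn0.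
have rhoE : rho_t (turan_rel (s * omega) omega) r.+1 =
    (uniform_esym (omega - 1) r Delta%:R / r.+1%:R)%R by rewrite DeltaE rho_t_turan.
split; last by rewrite rhoE /uniform_esym mulrC !mulrA.
have rho_ub (W : finType) (f : rel W) : in_class Delta omega f -> (0 < #|W|)%N ->
    (rho_t f r.+1 <= rho_t (turan_rel (s * omega) omega) r.+1)%R.
  by move=> f_class W_gt0; rewrite rhoE rho_t_le.
(* When Delta = 0 the Turan graph is empty and [rho_t] of it is k/0 = 0. *)
have [s0 | s_gt0] := posnP s.
  apply: (is_f_t_attained rho_ub (edgeless_in_class Delta omega_gt0)); rewrite ?card_ord //.
  by rewrite /rho_t s0 card_ord invr0 mulr0 divr_ge0 ?ler0n.
apply: (is_f_t_attained rho_ub) => //; first by rewrite DeltaE; exact: turan_in_class.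
by rewrite card_ord muln_gt0 s_gt0.
Qed.
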